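(* Let $\mathcal{O}$ be an oriented matroid on $E$, let $f,g,h\in E$ be pairwise distinct, and let $X,Y$ be comodular cocircuits with $X_g=Y_g\neq 0$ and $X_f=Y_f\neq 0$. If $X\leftrightarrow_{g,f}Y$, then $X\to_{g,h}Y$ implies $X\to_{f,h}Y$.
   Context: Oriented matroid $\mathcal{O}$ of rank $r$ on finite $E$, given by its cocircuits (sign vectors in $\{+,-,0\}^E$). Notation: $z(X)$ zero set, $\operatorname{sep}(X,Y)=\{e:X_e=-Y_e\neq 0\}$, composition $(X\circ Y)_e=X_e$ if $X_e\ne0$, else $Y_e$. An edge is a covector whose zero set is a flat of rank $r-2$; cocircuits $X\neq\pm Y$ are comodular if $X\circ Y$ is an edge. For comodular $X,Y$ and $e\in\operatorname{sep}(X,Y)$, cocircuit elimination of $e$ between $X$ and $Y$ yields the unique cocircuit $Z$ with $Z_e=0$ and $Z_h=(X\circ Y)_h$ for $h\notin\operatorname{sep}(X,Y)$. For distinct $a,b\in E$ and comodular $X,Y$ with $X_a=Y_a\ne0$, let $Z$ be obtained by eliminating $a$ between $-X$ and $Y$; write $X\to_{a,b}Y$ if $Z_b=+$, $X\leftarrow_{a,b}Y$ if $Z_b=-$, $X\leftrightarrow_{a,b}Y$ if $Z_b=0$. *)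

From HB Require Import structures.
From mathcomp Require Import all_boot.
Set Implicit Arguments. Unset Strict Implicit. Unset Printing Implicit Defensive.

Inductive sign := Zero | Plus | Minus.

Definition sign_to (s : sign) : option bool :=
  match s with Zero => None | Plus => Some true | Minus => Some false end.
Definition sign_of (o : option bool) : sign :=
  match o with None => Zero | Some true => Plus | Some false => Minus end.
Lemma sign_toK : cancel sign_to sign_of. Proof. by case. Qed.
HB.instance Definition _ := Finite.copy sign (can_type sign_toK).

Definition sopp (s : sign) : sign :=
  match s with Zero => Zero | Plus => Minus | Minus => Plus end.

Section SignVectors.
Variable E : finType.
Notation svec := {ffun E -> sign}.

Definition svzero : svec := [ffun _ => Zero].
Definition svopp (X : svec) : svec := [ffun e => sopp (X e)].
Definition comp (X Y : svec) : svec :=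
  [ffun e => if X e == Zero then Y e else X e].
Definition zero (X : svec) : {set E} := [set e | X e == Zero].
Definition supp (X : svec) : {set E} := [set e | X e != Zero].
Definition pos (X : svec) : {set E} := [set e | X e == Plus].
Definition neg (X : svec) : {set E} := [set e | X e == Minus].
Definition sep (X Y : svec) : {set E} :=
  [set e | (X e != Zero) && (X e == sopp (Y e))].

(* Cocircuit axioms of an oriented matroid on E. *)
Definition oriented_matroid (C : {set svec}) : Prop :=
  [/\ svzero \notin C,
      (forall X, X \in C -> svopp X \in C),
      (forall X Y, X \in C -> Y \in C -> supp X \subset supp Y ->
          X = Y \/ X = svopp Y)
    & (forall X Y e, X \in C -> Y \in C -> X <> svopp Y -> e \in sep X Y ->
          exists2 Z, Z \in C &
            [/\ Z e = Zero, pos Z \subset pos X :|: pos Y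
              & neg Z \subset neg X :|: neg Y])].

Definition covector (C : {set svec}) (T : svec) : Prop :=
  exists s : seq svec, all (mem C) s /\ T = foldr comp svzero s.

Definition flat (C : {set svec}) (F : {set E}) : Prop :=
  exists2 S : {set svec}, S \subset C & F = \bigcap_(X in S) zero X.

Definition chain_below (C : {set svec}) (F : {set E}) (n : nat) : Prop :=
  exists s : seq {set E}, [/\ size s = n, (forall G, G \in s -> flat C G)
     & sorted (fun A B : {set E} => A \proper B) (rcons s F)].

Definition flat_rank (C : {set svec}) (F : {set E}) (k : nat) : Prop :=
  [/\ flat C F, chain_below C F k & forall n, chain_below C F n -> n <= k].

Definition om_rank (C : {set svec}) (r : nat) : Prop := flat_rank C setT r.

Definition edge (C : {set svec}) (T : svec) : Prop :=
  covector C T /\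
  exists r, om_rank C r.+2 /\ flat_rank C (zero T) r.

Definition comodular (C : {set svec}) (X Y : svec) : Prop :=
  [/\ X \in C, Y \in C, X <> Y, X <> svopp Y & edge C (comp X Y)].

Definition elim_result (C : {set svec}) (X Y : svec) (e : E) (Z : svec) : Prop :=
  [/\ Z \in C, Z e = Zero
    & forall h, h \notin sep X Y -> Z h = comp X Y h].

Definition arrow_to (C : {set svec}) (a b : E) (X Y : svec) : Prop :=
  exists Z, elim_result C (svopp X) Y a Z /\ Z b = Plus.
Definition arrow_from (C : {set svec}) (a b : E) (X Y : svec) : Prop :=
  exists Z, elim_result C (svopp X) Y a Z /\ Z b = Minus.
Definition arrow_both (C : {set svec}) (a b : E) (X Y : svec) : Prop :=
  exists Z, elim_result C (svopp X) Y a Z /\ Z b = Zero.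

End SignVectors.

From Pilot Require Import Defs.
From HB Require Import structures.
From mathcomp Require Import all_boot.

Set Implicit Arguments.
Unset Strict Implicit.
Unset Printing Implicit Defensive.

(* Both [X ->_{g,h} Y] and [X ->_{f,h} Y] are read off the cocircuit obtained
   by eliminating between [-X] and [Y], and for a comodular pair this cocircuit
   is unique: all such eliminations contain the coline z(X o Y) together with
   the eliminated element, so two of them spanning different hyperplanes would
   meet in a flat strictly between the coline and a hyperplane, giving a chain
   of flats longer than the rank permits; and they cannot be opposite, since
   both agree with [Y] off the support of [X].  Hence the cocircuit [Z] with
   [Z_g = 0 = Z_f] witnessing [X <->_{g,f} Y] is also the elimination of [f],
   and it is the one with [Z_h = +]. *)

Lemma sorted_rcons (T : Type) (r : rel T) s a b :
  sorted r (rcons s a) -> r a b -> sorted r (rcons (rcons s a) b).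
Proof.
case: s => [|x s] /=; first by move=> _ ->.
by move=> sorted_sa rab; rewrite rcons_path sorted_sa last_rcons.
Qed.

Section Cocircuits.
Variable E : finType.
Implicit Types (C : {set {ffun E -> sign}}) (F G T : {set E}).
Implicit Types (X Y Z : {ffun E -> sign}).

Lemma flat_zero C Z : Z \in C -> flat C (zero Z).
Proof. by move=> CZ; exists [set Z]; rewrite ?sub1set ?big_set1. Qed.

Lemma flat_zeroI C Z1 Z2 : Z1 \in C -> Z2 \in C ->
  flat C (zero Z1 :&: zero Z2).
Proof.
move=> CZ1 CZ2; exists [set Z1; Z2]; first by rewrite subUset !sub1set CZ1 CZ2.
apply/setP => e; rewrite inE; apply/andP/bigcapP => [[e1 e2] Z | inZ].
  by rewrite in_set2 => /orP[] /eqP ->.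
by split; apply: inZ; rewrite in_set2 eqxx ?orbT.
Qed.

Lemma chain_below_proper C F G n :
  chain_below C F n -> flat C F -> F \proper G -> chain_below C G n.+1.
Proof.
move=> [s [size_s flat_s sorted_s]] flatF ltFG.
exists (rcons s F); split; rewrite ?size_rcons ?size_s //.
  by move=> H; rewrite mem_rcons inE => /predU1P[-> | /flat_s].
exact: sorted_rcons.
Qed.

Lemma zero_proper_setT C Z : oriented_matroid C -> Z \in C ->
  zero Z \proper setT.
Proof.
case=> C0 _ _ _ CZ; rewrite properT; apply: contraNneq C0 => zeroZT.
suff <- : Z = svzero E by [].
apply/ffunP => e; rewrite ffunE; apply/eqP.
by have := in_setT e; rewrite -zeroZT inE.
Qed.

Lemma cocircuit_zero_subset C Z1 Z2 : oriented_matroid C ->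
  Z1 \in C -> Z2 \in C -> zero Z1 \subset zero Z2 ->
  Z2 = Z1 \/ Z2 = svopp Z1.
Proof.
case=> _ _ supp_min _ CZ1 CZ2 zero12; apply: supp_min => //.
apply/subsetP => e; rewrite !inE; apply: contraNN => /eqP Z1e.
by have := subsetP zero12 e; rewrite !inE Z1e => /(_ isT).
Qed.

Lemma cocircuit_zero_subset_corank2 C T r Z1 Z2 :
  oriented_matroid C -> om_rank C r.+2 -> flat_rank C T r ->
  Z1 \in C -> Z2 \in C -> T \proper zero Z1 :&: zero Z2 ->
  zero Z1 \subset zero Z2.
Proof.
move=> om [_ _ chain_max] [flatT chainT _] CZ1 CZ2 ltTI.
apply/idPn => not_sub.
have ltIZ1 : zero Z1 :&: zero Z2 \proper zero Z1.
  by rewrite properE subsetIl /= subsetI subxx.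
have chain_r3 : chain_below C setT r.+3.
  apply: chain_below_proper _ (flat_zero CZ1) (zero_proper_setT om CZ1).
  apply: chain_below_proper _ (flat_zeroI CZ1 CZ2) ltIZ1.
  exact: chain_below_proper chainT flatT ltTI.
by have := chain_max _ chain_r3; rewrite ltnn.
Qed.

Lemma elim_result_zero C X Y e Z :
  elim_result C X Y e Z -> zero (Defs.comp X Y) \subset zero Z.
Proof.
case=> _ _ agree; apply/subsetP => x; rewrite !inE ffunE.
case: (X x =P Zero) => [Xx /eqP Yx | /[swap] /eqP //].
by rewrite agree ?ffunE ?Xx ?Yx // !inE Xx.
Qed.

Lemma zero_comp_oppl X Y : zero (Defs.comp (svopp X) Y) = zero (Defs.comp X Y).
Proof. by apply/setP => e; rewrite !inE !ffunE; case: (X e). Qed.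

Lemma cocircuit_not_opp_witness C X Y : oriented_matroid C ->
  X \in C -> Y \in C -> X <> Y -> X <> svopp Y ->
  exists e, X e = Zero /\ Y e != Zero.
Proof.
case=> _ _ supp_min _ CX CY neXY neXoY.
have : ~~ (supp Y \subset supp X).
  apply/negP => /(supp_min _ _ CY CX) [YX | YoX]; first exact: neXY.
  by apply: neXoY; rewrite YoX; apply/ffunP => e; rewrite !ffunE; case: (X e).
by case/subsetPn => e; rewrite !inE => Ye /negPn /eqP Xe; exists e.
Qed.

Lemma elim_result_uniq C X Y g Z1 Z2 :
  oriented_matroid C -> comodular C X Y -> X g != Zero ->
  elim_result C (svopp X) Y g Z1 -> elim_result C (svopp X) Y g Z2 -> Z1 = Z2.
Proof.
move=> om [CX CY neXY neXoY [_ [r [rankE rankT]]]] Xg elim1 elim2.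
have [[CZ1 Z1g agree1] [CZ2 Z2g agree2]] := (elim1, elim2).
have ltT : zero (Defs.comp X Y) \proper zero Z1 :&: zero Z2.
  rewrite properE subsetI -zero_comp_oppl.
  rewrite (elim_result_zero elim1) (elim_result_zero elim2) /=.
  apply/subsetPn; exists g; rewrite !inE ?ffunE ?Z1g ?Z2g //.
  by case: (X g) Xg.
have [Z21 | Z2o1] := cocircuit_zero_subset om CZ1 CZ2
  (cocircuit_zero_subset_corank2 om rankE rankT CZ1 CZ2 ltT); first by [].
have [e [Xe Ye]] := cocircuit_not_opp_witness om CX CY neXY neXoY.
have e_nsep : e \notin sep (svopp X) Y by rewrite !inE ffunE Xe.
have := agree2 e e_nsep; rewrite Z2o1 ffunE agree1 // !ffunE Xe /=.
by case: (Y e) Ye.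
Qed.

Lemma elim_result_move C X Y a b Z :
  elim_result C X Y a Z -> Z b = Zero -> elim_result C X Y b Z.
Proof. by case. Qed.

End Cocircuits.

Theorem proposition2p4 (E : finType) (C : {set {ffun E -> sign}})
  (f g h : E) (X Y : {ffun E -> sign}) :
  oriented_matroid C ->
  f != g -> g != h -> f != h ->
  comodular C X Y ->
  X g = Y g -> X g != Zero ->
  X f = Y f -> X f != Zero ->
  arrow_both C g f X Y ->
  arrow_to C g h X Y -> arrow_to C f h X Y.
Proof.
move=> om _ _ _ comodXY _ Xg _ _ [Z [elimZ Zf]] [Z' [elimZ' Z'h]].
have ZZ' := elim_result_uniq om comodXY Xg elimZ elimZ'.
by exists Z; split; [exact: elim_result_move elimZ Zf | rewrite ZZ'].
Qed.
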